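(* Let $G$ be a map graph with a corresponding planar bipartite graph $B$, let $\mathcal{D}=(T,\beta_{\mathcal{D}})$ be a nice tree decomposition of $B$, and let $\mathcal{D}'$ be derived from $\mathcal{D}$ as described in the context. Let $t$ be a node of $T$ labelled join in $\mathcal{D}$, with children $t_1$ and $t_2$. Then $\mathsf{Original}(t)=\mathsf{Original}(t_1)=\mathsf{Original}(t_2)$, $\mathsf{Cliques}(t)=\mathsf{Cliques}(t_1)=\mathsf{Cliques}(t_2)$, $\mathsf{Fake}(t_1)\cap\mathsf{Fake}(t_2)=\emptyset$, and $\mathsf{Fake}(t)=\mathsf{Fake}(t_1)\cup\mathsf{Fake}(t_2)$.
   Context: All graphs are finite and simple. For a bipartite graph $B$ with bipartition $V(B)=W\uplus U$, the half-square of $B$ is the graph on $W$ in which two vertices are adjacent iff they are at distance exactly $2$ in $B$. A graph $G$ is a map graph iff it is the half-square of some planar bipartite graph $B$; such $B$ (with $W=V(G)$) is a corresponding planar bipartite graph, and $S(G)=U$ is the set of special vertices; for $s\in S(G)$, $N_B(s)$ is a clique of $G$ called a special clique. A tree decomposition $(T,\beta)$: rooted tree $T$, bags covering all vertices and edges, and for each vertex the nodes containing it induce a connected subtree. $\gamma_{\mathcal{D}}(t)$ is the union of bags of $t$ and its descendants. A nice tree decomposition has empty root bag and each node is a leaf (empty bag), introduce$(w)$, forget$(w)$ (one child, bag obtained by adding/removing $w$), or join (two children whose bags equal $\beta(t)$). The derived decomposition $\mathcal{D}'=(T,\beta_{\mathcal{D}'})$ has $\beta_{\mathcal{D}'}(t)=(\beta_{\mathcal{D}}(t)\cap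 V(G))\cup\bigcup_{s\in\beta_{\mathcal{D}}(t)\cap S(G)}(N_B(s)\cap\gamma_{\mathcal{D}}(t))$. Define $\mathsf{Original}(t)=\beta_{\mathcal{D}}(t)\cap\beta_{\mathcal{D}'}(t)$, $\mathsf{Fake}(t)=\beta_{\mathcal{D}'}(t)\setminus\beta_{\mathcal{D}}(t)$, and $\mathsf{Cliques}(t)=\{N_B(s): s\in S(G)\cap\beta_{\mathcal{D}}(t)\}$. *)

From mathcomp Require Import all_boot all_fingroup.
Set Implicit Arguments. Unset Strict Implicit. Unset Printing Implicit Defensive.

Section Graphs.
Variable V : finType.

Definition simple_graph (e : rel V) : Prop :=
  (forall u v, e u v = e v u) /\ (forall v, ~~ e v v).

Definition dart (e : rel V) := {d : V * V | e d.1 d.2}.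

(* reversal of a dart (well-defined when e is symmetric) *)
Definition dart_rev (e : rel V) (d : dart e) : dart e := insubd d ((val d).2, (val d).1).

Definition n_components (e : rel V) : nat := n_comp e predT.

Definition n_isolated (e : rel V) : nat := #|[set v | ~~ [exists u, e v u]]|.

Definition rotation_system (e : rel V) (sigma : {perm dart e}) : Prop :=
  (forall d, (val (sigma d)).1 = (val d).1) /\
  (forall d d', (val d).1 = (val d').1 -> exists k, (sigma ^+ k)%g d = d').

(* faces of the embedding given by sigma: orbits of d |-> sigma (rev d) *)
Definition n_faces (e : rel V) (sigma : {perm dart e}) : nat :=
  fcard (fun d => sigma (dart_rev d)) predT.

(* Planarity (Heffter--Edmonds--Euler): the graph admits a rotation system of genus 0,
   i.e. V - E + F = 2 * (#components with an edge) + (#isolated vertices),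
   written without subtraction using #darts = 2E. *)
Definition planar (e : rel V) : Prop :=
  exists sigma : {perm dart e}, rotation_system sigma /\
    2 * #|V| + 2 * n_faces sigma + 2 * n_isolated e
    = 4 * n_components e + #|{: dart e}|.

Definition bipartite_wrt (e : rel V) (W : {set V}) : Prop :=
  forall u v, e u v -> (u \in W) != (v \in W).

Definition half_square (e : rel V) (W : {set V}) : rel V :=
  fun x y => [&& x \in W, y \in W, x != y & [exists s, e x s && e s y]].

Definition nbhd (e : rel V) (v : V) : {set V} := [set x | e v x].

End Graphs.

Section TreeDec.
Variables (N V : finType).
Definition rooted_tree (par : N -> N) (r : N) : Prop :=
  par r = r /\ forall t, fconnect par t r.

Definition children (par : N -> N) (r t : N) : {set N} :=
  [set c | (c != r) && (par c == t)].

Definition bag_adj (par : N -> N) (bag : N -> {set V}) (v : V) : rel N :=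
  fun a b => [&& v \in bag a, v \in bag b & (par a == b) || (par b == a)].

Definition tree_decomposition (e : rel V) (par : N -> N) (r : N) (bag : N -> {set V}) : Prop :=
  rooted_tree par r /\
  (forall v, exists t, v \in bag t) /\
  (forall u v, e u v -> exists t, (u \in bag t) && (v \in bag t)) /\
  (forall v t1 t2, v \in bag t1 -> v \in bag t2 -> connect (bag_adj par bag v) t1 t2).

Definition is_leaf par r (bag : N -> {set V}) t : Prop :=
  children par r t = set0 /\ bag t = set0.
Definition is_introduce par r (bag : N -> {set V}) t (w : V) : Prop :=
  exists c, children par r t = [set c] /\ w \notin bag c /\ bag t = w |: bag c.
Definition is_forget par r (bag : N -> {set V}) t (w : V) : Prop :=
  exists c, children par r t = [set c] /\ w \in bag c /\ bag t = bag c :\ w.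
Definition is_join par r (bag : N -> {set V}) t t1 t2 : Prop :=
  t1 != t2 /\ children par r t = [set t1; t2] /\ bag t1 = bag t /\ bag t2 = bag t.

Definition nice_tree_decomposition (e : rel V) par r (bag : N -> {set V}) : Prop :=
  tree_decomposition e par r bag /\ bag r = set0 /\
  forall t, is_leaf par r bag t \/ (exists w, is_introduce par r bag t w)
            \/ (exists w, is_forget par r bag t w) \/ (exists t1 t2, is_join par r bag t t1 t2).

Definition gamma (par : N -> N) (bag : N -> {set V}) (t : N) : {set V} :=
  \bigcup_(d | fconnect par d t) bag d.

(* derived decomposition; W = V(G), S(G) = ~: W *)
Definition derived_bag (e : rel V) (W : {set V}) par (bag : N -> {set V}) (t : N) : {set V} :=
  (bag t :&: W) :|: \bigcup_(s in bag t :&: ~: W) (nbhd e s :&: gamma par bag t).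

Definition Original e W par (bag : N -> {set V}) t : {set V} :=
  bag t :&: derived_bag e W par bag t.
Definition Fake e W par (bag : N -> {set V}) t : {set V} :=
  derived_bag e W par bag t :\: bag t.
Definition Cliques e (W : {set V}) (bag : N -> {set V}) t : {set {set V}} :=
  [set nbhd e s | s in bag t :&: ~: W].
End TreeDec.

(* By bipartiteness [Original u] is
   [bag u :&: W], and [Cliques u] depends on [bag u] only, which settles the
   first two claims.  [Fake u] consists of the vertices of [gamma u] outside
   [bag u] that are adjacent to a special vertex of [bag u].  Since [gamma t]
   is [bag t] together with [gamma t1] and [gamma t2], the union formula
   follows.  A vertex in both [gamma t1] and [gamma t2] occurs in bags on both
   sides of the tree edge between [t1] and [t], so by connectivity of the nodes
   whose bag contains it, it lies in [bag t1] = [bag t] and is not fake. *)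

From mathcomp Require Import all_boot all_fingroup.
Set Implicit Arguments. Unset Strict Implicit. Unset Printing Implicit Defensive.

Lemma connect_exit (T : finType) (e : rel T) (S : pred T) x y :
  connect e x y -> S x -> ~~ S y -> exists a b, [/\ e a b, S a & ~~ S b].
Proof.
case/connectP => p; elim: p x => [|z p IHp] x /=; first by move=> _ -> ->.
case/andP=> exz pz yl Sx nSy.
have [Sz|nSz] := boolP (S z); first exact: IHp pz yl Sz nSy.
by exists x, z.
Qed.

Section RootedTree.
Variables (N : finType) (par : N -> N) (r : N).
Hypotheses (par_root : par r = r) (reach_root : forall t, fconnect par t r).

(* The cycle through [x] also passes through [r], which is fixed by [par]. *)
Lemma iter_cycle_root x n : iter n.+1 par x = x -> x = r.
Proof.
move=> cyc; set m := findex par x r.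
have xr : iter m par x = r := iter_findex (reach_root x).
have cycm : iter (m * n.+1) par x = x by rewrite iterM iter_fix.
by rewrite -cycm -(subnK (leq_pmulr m (ltn0Sn n))) iterD xr iter_fix.
Qed.

Lemma fconnect_antisym x y : fconnect par x y -> fconnect par y x -> x = y.
Proof.
move=> /iter_findex; case: (findex par x y) => [//|a] xy /iter_findex yx.
have x_root : x = r.
  by apply: (@iter_cycle_root _ (findex par y x + a)); rewrite -addnS iterD xy yx.
by rewrite -xy x_root iter_fix.
Qed.

Lemma fconnect_par_neq x y : fconnect par x y -> x != y -> fconnect par (par x) y.
Proof.
move=> /iter_findex; case: (findex par x y) => [/= -> /eqP //|n].
by rewrite iterSr => <- _; apply: fconnect_iter.
Qed.

Lemma fconnect_total d x y :
  fconnect par d x -> fconnect par d y -> fconnect par x y || fconnect par y x.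
Proof.
move=> /iter_findex dx /iter_findex dy.
have [le_xy|/ltnW le_yx] := leqP (findex par d x) (findex par d y).
  by rewrite -dx -dy -(subnK le_xy) iterD fconnect_iter.
by rewrite -dx -dy -(subnK le_yx) iterD fconnect_iter orbT.
Qed.

Lemma children_par t c : c \in children par r t -> par c = t.
Proof. by rewrite inE => /andP[_ /eqP]. Qed.

Lemma fconnect_children t d : fconnect par d t ->
  d = t \/ exists2 c, c \in children par r t & fconnect par d c.
Proof.
move=> /iter_findex; move: (findex par d t) => n.
elim: n d => [|n IHn] d; first by move=> <-; left.
rewrite iterSr => /IHn [pd|[c c_child pd_c]]; last first.
  by right; exists c => //; apply: connect_trans (fconnect1 par d) pd_c.
have [d_root|d_nroot] := eqVneq d r; first by left; rewrite -pd d_root par_root.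
by right; exists d; rewrite ?inE ?d_nroot ?pd ?eqxx.
Qed.

Lemma children_fconnect_eq t c1 c2 :
  c1 \in children par r t -> c2 \in children par r t ->
  fconnect par c1 c2 -> c1 = c2.
Proof.
move=> c1_child c2_child c12; have [//|c1_neq] := eqVneq c1 c2.
move: (c2_child); rewrite inE => /andP[/negP c2_nroot _]; case: c2_nroot.
have t_c2 : fconnect par t c2 by rewrite -(children_par c1_child) fconnect_par_neq.
have c2_t : fconnect par c2 t by rewrite -(children_par c2_child) fconnect1.
have c2_fix : par c2 = c2.
  by rewrite (children_par c2_child) (fconnect_antisym t_c2 c2_t).
by apply/eqP/(@iter_cycle_root _ 0).
Qed.

Lemma fconnect_sibling t c1 c2 d :
  c1 \in children par r t -> c2 \in children par r t -> c1 != c2 ->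
  fconnect par d c1 -> ~~ fconnect par d c2.
Proof.
move=> c1_child c2_child c1_neq dc1; apply/negP => dc2.
case/orP: (fconnect_total dc1 dc2) => [c12 | c21].
  by rewrite (children_fconnect_eq c1_child c2_child c12) eqxx in c1_neq.
by rewrite (children_fconnect_eq c2_child c1_child c21) eqxx in c1_neq.
Qed.

Variables (V : finType) (bag : N -> {set V}).

Lemma gamma_children t :
  gamma par bag t = bag t :|: \bigcup_(c in children par r t) gamma par bag c.
Proof.
apply/setP => x; apply/bigcupP/setUP.
  case=> d /fconnect_children [-> | [c c_child dc]] xd; [by left | right].
  by apply/bigcupP; exists c => //; apply/bigcupP; exists d.
case=> [xt | /bigcupP[c c_child /bigcupP[d dc xd]]]; first by exists t.
exists d => //; rewrite -(children_par c_child).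
exact: connect_trans dc (fconnect1 _ _).
Qed.

Hypothesis bag_connected : forall v t1 t2, v \in bag t1 -> v \in bag t2 ->
  connect (bag_adj par bag v) t1 t2.

Lemma bag_subtree_boundary c d1 d2 x :
  fconnect par d1 c -> ~~ fconnect par d2 c -> x \in bag d1 -> x \in bag d2 ->
  x \in bag c.
Proof.
move=> d1c d2c xd1 xd2.
have [a [b [/and3P[xa _ ab] ac bc]]] :=
  connect_exit (S := [pred d | fconnect par d c]) (bag_connected xd1 xd2) d1c d2c.
move: ac bc => /= ac bc.
case/orP: ab => /eqP ab.
  have [<- // | a_neq] := eqVneq a c.
  by move: (fconnect_par_neq ac a_neq); rewrite ab (negbTE bc).
by case/negP: bc; rewrite -ab in ac; apply: connect_trans (fconnect1 _ b) ac.
Qed.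

Lemma gammaI_siblings t c1 c2 :
  c1 \in children par r t -> c2 \in children par r t -> c1 != c2 ->
  gamma par bag c1 :&: gamma par bag c2 \subset bag c1.
Proof.
move=> c1_child c2_child c1_neq.
apply/subsetP => x /setIP[/bigcupP[d1 d1c xd1] /bigcupP[d2 d2c xd2]].
apply: (bag_subtree_boundary d1c _ xd1 xd2).
by apply: (fconnect_sibling c2_child c1_child _ d2c); rewrite eq_sym.
Qed.

End RootedTree.

Section DerivedBags.
Variables (V N : finType) (e : rel V) (W : {set V}) (par : N -> N) (bag : N -> {set V}).

Lemma Original_bipartite u :
  bipartite_wrt e W -> Original e W par bag u = bag u :&: W.
Proof.
move=> bip; apply/setP => x; rewrite !inE.
case: (x \in bag u) => //=; case xW: (x \in W) => //=.
apply/negP => /bigcupP[s]; rewrite !inE => /andP[_ sW] /andP[/bip].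
by rewrite xW (negbTE sW).
Qed.

Lemma FakeE u : Fake e W par bag u =
  (\bigcup_(s in bag u :&: ~: W) nbhd e s) :&: gamma par bag u :\: bag u.
Proof.
apply/setP => x; rewrite !inE; case: (x \in bag u) => //=.
apply/bigcupP/andP => [[s su] | [/bigcupP[s su xs] xg]].
  by rewrite inE => /andP[xs xg]; split=> //; apply/bigcupP; exists s.
by exists s; rewrite // inE xs.
Qed.

End DerivedBags.

Theorem lemma13 (V : finType) (B : rel V) (W : {set V})
  (N : finType) (par : N -> N) (r : N) (bag : N -> {set V}) (t t1 t2 : N) :
  simple_graph B -> bipartite_wrt B W -> planar B ->
  nice_tree_decomposition B par r bag ->
  is_join par r bag t t1 t2 ->
  (Original B W par bag t = Original B W par bag t1 /\
   Original B W par bag t1 = Original B W par bag t2) /\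
  (Cliques B W bag t = Cliques B W bag t1 /\
   Cliques B W bag t1 = Cliques B W bag t2) /\
  Fake B W par bag t1 :&: Fake B W par bag t2 = set0 /\
  Fake B W par bag t = Fake B W par bag t1 :|: Fake B W par bag t2.
Proof.
move=> _ bip _ [[[par_root reach_root] [_ [_ bag_connected]]] _].
move=> [t12 [chs [bag_t1 bag_t2]]].
have t1_child : t1 \in children par r t by rewrite chs !inE eqxx.
have t2_child : t2 \in children par r t by rewrite chs !inE eqxx orbT.
split; first by rewrite !Original_bipartite // bag_t1 bag_t2.
split; first by rewrite /Cliques bag_t1 bag_t2.
rewrite !FakeE bag_t1 bag_t2; split.
  have meet := subsetP (gammaI_siblings par_root reach_root bag_connected
                                         t1_child t2_child t12).
  apply/setP => x; rewrite !inE; apply/negbTE/negP.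
  case/and4P => /and3P[xt _ g1] _ _ g2.
  have x_t1 : x \in bag t1 by apply: meet; rewrite inE g1 g2.
  by rewrite -bag_t1 x_t1 in xt.
rewrite (gamma_children par_root bag t) chs bigcup_setU !big_set1.
by apply/setP => x; rewrite !inE; case: (x \in bag t) => //=; rewrite andb_orr.
Qed.
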